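(* Let $N\ge5$ be odd. Let $h=(h_\alpha,h_\beta,h_1,\dots,h_{N-1})$ and $h'=(h'_\alpha,h'_\beta,h'_1,\dots,h'_{N-1})$ be real parameter vectors with all entries nonzero, and let $S$ be a real nonsingular $(N+1)\times(N+1)$ matrix satisfying $$S\tilde A(h)=\tilde A(h')S,\qquad Se_1=e_1,\qquad e_2^TS=e_2^T,$$ where $\tilde A$ is defined in the context. Then for every $k$ with $3\le k\le N-1$, the first $k$ columns of $S$ are $e_1,\ e_2,\ \varepsilon_3e_3,\ \dots,\ \varepsilon_ke_k$ with $\varepsilon_j\in\{1,-1\}$, and moreover $h_\alpha=h'_\alpha$, $|h_\beta|=|h'_\beta|$ and $|h_j|=|h'_j|$ for all $1\le j\le k-2$.
   Context: For an integer $N\ge1$ and real parameters $h=(h_\alpha,h_\beta,h_1,\dots,h_{N-1})$, set $(c_1,c_2,c_3,\dots,c_{N+1})=(h_\alpha,h_\beta,h_1,\dots,h_{N-1})$ and let $A(h)$ be the real $(N+2)\times(N+2)$ tridiagonal matrix with $A_{j,j+1}=c_j$, $A_{j+1,j}=-c_j$ for $j=1,\dots,N+1$ and all other entries zero. For odd $N$ and all parameters nonzero, define the $(N+1)\times(N+1)$ matrix $\tilde A(h)$ as follows (with the conventions $h_{-1}:=h_\alpha$, $h_0:=h_\beta$): its first $N$ columns coincide with the first $N$ columns of the leading $(N+1)\times(N+1)$ principal submatrix of $A(h)$, i.e. $\tilde A_{jl}=A_{jl}$ for $1\le j\le N+1$, $1\le l\le N$; its last column has $\tilde A_{k,N+1}=0$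 for even $k$ and, for odd $k=2i-1$ ($1\le i\le (N+1)/2$), $$\tilde A_{2i-1,N+1}=h_{N-1}^2\,\frac{\prod_{j=i}^{(N-1)/2}h_{2j-2}}{\prod_{j=i}^{(N+1)/2}h_{2j-3}}+\delta_{i,(N+1)/2}\,h_{N-2}.$$ (In particular $\tilde A_{N,N+1}=h_{N-2}+h_{N-1}^2/h_{N-2}$ and $\tilde A_{N+1,N+1}=0$.) This matrix is the system matrix of the minimal (observable) subsystem obtained from $(A,e_1,e_2^T)$ for odd $N$. $e_j$ denotes the $j$-th standard basis vector; empty products equal $1$. *)

(* The field of reals is modelled by an arbitrary
   realFieldType R (the statement is purely algebraic). *)
From HB Require Import structures.
From mathcomp Require Import all_boot all_order all_algebra.
Set Implicit Arguments. Unset Strict Implicit. Unset Printing Implicit Defensive.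
Import Order.TTheory GRing.Theory Num.Theory.
Local Open Scope ring_scope.

(* Parameter vector convention: hv : nat -> R with
     hv 0 = h_alpha, hv 1 = h_beta, hv (j+1) = h_j  (1 <= j <= N-1),
   i.e. h_j = hv (j+1) for all j >= -1 (h_{-1} = h_alpha, h_0 = h_beta),
   and hv i = c_{i+1} in the notation (c_1,...,c_{N+1}) of the paper.
   Only hv 0, ..., hv N are relevant. *)

Definition Afull (R : ringType) (N : nat) (hv : nat -> R) : 'M[R]_(N.+2) :=
  \matrix_(i < N.+2, l < N.+2)
    (if (l : nat) == i.+1 then hv i
     else if (i : nat) == l.+1 then - hv l else 0).

(* Entry of the last column of Atilde in (0-indexed) row r.
   For r odd (paper's k = r+1 even) it is 0; for r even, k = r+1 = 2i-1 with
   i = r/2 + 1, and the entry is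
   h_{N-1}^2 * prod_{j=i}^{(N-1)/2} h_{2j-2} / prod_{j=i}^{(N+1)/2} h_{2j-3}
     + [i = (N+1)/2] h_{N-2},
   where h_{2j-2} = hv (2j-1), h_{2j-3} = hv (2j-2), h_{N-1} = hv N,
   h_{N-2} = hv (N-1). *)
Definition lastcol (R : fieldType) (N : nat) (hv : nat -> R) (r : nat) : R :=
  if odd r then 0 else
  let i := (r./2).+1 in
  hv N ^+ 2 * (\prod_(i <= j < ((N - 1)./2).+1) hv (2 * j - 1)%N)
    / (\prod_(i <= j < ((N + 1)./2).+1) hv (2 * j - 2)%N)
  + (if i == (N + 1)./2 then hv (N - 1)%N else 0).

Definition Atilde (R : fieldType) (N : nat) (hv : nat -> R) : 'M[R]_(N.+1) :=
  \matrix_(r < N.+1, q < N.+1)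
    (if (q < N)%N then Afull N hv (widen_ord (leqnSn _) r) (widen_ord (leqnSn _) q)
     else lastcol N hv r).

(* 1-indexed standard basis column vector e_j in R^n. *)
Definition ecol (R : ringType) (n j : nat) : 'cV[R]_n :=
  \col_(r < n) ((r.+1 == j)%:R).

From HB Require Import structures.
From mathcomp Require Import all_boot all_order all_algebra.
From mathcomp Require Import zify ring.
Import Order.TTheory GRing.Theory Num.Theory.
Set Implicit Arguments. Unset Strict Implicit. Unset Printing Implicit Defensive.
Local Open Scope ring_scope.

(* Index rows and columns from 0.  Column [c] of [S Atilde h = Atilde h' S]
   expresses column [c+1] of [S] through columns [c-1] and [c]: if these are
   [eps (c-1) e_(c-1)] and [eps c e_c] with [eps ^+ 2 = 1], then column [c+1]
   is [eps (c+1) e_(c+1)], where [eps i = prod_(j < i) h' j / h j].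
   The signs are controlled by row 1, since [S e_0 = e_0] and [e_1^T S = e_1^T]
   give [e_1^T A'^c S = e_1^T A^c].  For [c <= N-2] the row [e_1^T A^c]
   vanishes beyond position [c+1] and equals [h 1 * ... * h c] there (the last
   column of [Atilde], which is not tridiagonal, is killed by the first [N-2]
   rows of [Atilde]).  Comparing both sides at position [c+1] gives
   [h' 1 * ... * h' c * eps (c+1) = h 1 * ... * h c], which yields [h' 0 = h 0]
   for [c = 0] and then [eps (c+1) ^+ 2 = 1], i.e. [h' c ^+ 2 = h c ^+ 2]. *)

Section NatIndexedEntries.
Variables (R : pzRingType) (n : nat).

(* Avoids ordinal casts in index arithmetic; only indices [<= n] are
   meaningful, [inord] sends the others to junk positions. *)
Definition mxn (M : 'M[R]_n.+1) (r q : nat) : R := M (inord r) (inord q).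

Lemma mxnE (M : 'M[R]_n.+1) (i j : 'I_n.+1) : M i j = mxn M i j.
Proof. by rewrite /mxn !inord_val. Qed.

Lemma mxn_mul (A B : 'M[R]_n.+1) r q : (r <= n)%N -> (q <= n)%N ->
  mxn (A *m B) r q = \sum_(p < n.+1) mxn A r p * mxn B p q.
Proof. by move=> _ _; rewrite /mxn mxE; apply: eq_bigr => p _; rewrite inord_val. Qed.

Lemma mxn1 r q : (r <= n)%N -> (q <= n)%N -> mxn 1%:M r q = (r == q)%:R.
Proof. by move=> Hr Hq; rewrite /mxn mxE -(inj_eq val_inj) /= !inordK. Qed.

Lemma sum_ord_single (F : nat -> R) a : (a < n.+1)%N ->
  (forall p, (p < n.+1)%N -> p != a -> F p = 0) -> \sum_(p < n.+1) F p = F a.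
Proof.
move=> Ha HF; rewrite (bigD1 (Ordinal Ha)) //= big1 ?addr0 // => p Hp.
exact: HF.
Qed.

Lemma sum_ord_pair (F : nat -> R) a b : (a < n.+1)%N -> (b < n.+1)%N -> a != b ->
  (forall p, (p < n.+1)%N -> p != a -> p != b -> F p = 0) ->
  \sum_(p < n.+1) F p = F a + F b.
Proof.
move=> Ha Hb Hab HF; rewrite (bigD1 (Ordinal Ha)) //= (bigD1 (Ordinal Hb)) /=.
  by rewrite big1 ?addr0 // => p /andP[Hpa Hpb]; apply: HF.
by rewrite eq_sym.
Qed.

End NatIndexedEntries.

Lemma mulmx_intertwineX (R : pzRingType) n (S A B : 'M[R]_n.+1) :
  S *m A = B *m S -> forall m, S *m A ^+ m = B ^+ m *m S.
Proof.
move=> SAB; elim=> [|m IH]; first by rewrite !expr0 mulmx1 mul1mx.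
by rewrite !exprSr -!mulmxE mulmxA IH -mulmxA SAB mulmxA.
Qed.

Lemma prod_nat_neq0 (R : idomainType) (F : nat -> R) a b :
  (forall j, (a <= j < b)%N -> F j != 0) -> \prod_(a <= j < b) F j != 0.
Proof.
move=> H; rewrite prodf_seq_neq0; apply/allP => j; rewrite mem_index_iota => Hj.
by apply/implyP => _; apply: H.
Qed.

Section AtildeEntries.
Variables (R : fieldType) (N : nat) (hv : nat -> R).

Definition atilde (r q : nat) : R :=
  if (q < N)%N then (if q == r.+1 then hv r else if r == q.+1 then - hv q else 0)
  else lastcol N hv r.

Lemma mxn_Atilde r q : (r <= N)%N -> (q <= N)%N -> mxn (Atilde N hv) r q = atilde r q.
Proof. by move=> Hr Hq; rewrite /mxn /Atilde /Afull !mxE /= !inordK. Qed.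

Lemma atilde_tridiag r q : (q < N)%N ->
  atilde r q = if q == r.+1 then hv r else if r == q.+1 then - hv q else 0.
Proof. by rewrite /atilde => ->. Qed.

Lemma atilde_last r : atilde r N = lastcol N hv r.
Proof. by rewrite /atilde ltnn. Qed.

Lemma lastcol_odd r : odd r -> lastcol N hv r = 0.
Proof. by rewrite /lastcol => ->. Qed.

Lemma sum_mul_atilde (F : nat -> R) c : (c < N)%N ->
  \sum_(p < N.+1) F p * atilde p c =
  (if (0 < c)%N then F c.-1 * hv c.-1 else 0) - F c.+1 * hv c.
Proof.
case: c => [|c] Hc /=.
  rewrite (@sum_ord_single _ _ (fun p => F p * atilde p 0) 1%N) //; last first.
    by move=> p _ Hp; rewrite atilde_tridiag //= (negbTE Hp) mulr0.
  by rewrite atilde_tridiag //=; ring.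
rewrite (@sum_ord_pair _ _ (fun p => F p * atilde p c.+1) c c.+2);
  try by [lia | rewrite eq_sym; apply/eqP; lia].
  rewrite !atilde_tridiag // eqxx.
  have -> : (c.+1 == c.+3) = false by apply/negbTE/eqP; lia.
  by rewrite eqxx mulrN.
by move=> p _ Hp1 Hp2; rewrite atilde_tridiag // eqSS eq_sym (negbTE Hp1) (negbTE Hp2) mulr0.
Qed.

Hypotheses (oddN : odd N) (hv_neq0 : forall j, (j <= N)%N -> hv j != 0).

Lemma lastcol_step s : ~~ odd s -> (s + 2 <= N - 3)%N ->
  hv s * lastcol N hv s = hv s.+1 * lastcol N hv s.+2.
Proof.
move=> es Hs.
have eN : N = (N./2).*2.+1 by rewrite -{1}(odd_double_half N) oddN.
have es' : s = (s./2).*2 by rewrite -{1}(odd_double_half s) (negbTE es).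
set u := N./2 in eN; set t := s./2 in es'.
have Htu : (t.+2 <= u)%N by move: Hs; rewrite eN {1}es' -!muln2; lia.
have h1 : ((N - 1)./2 = u)%N by rewrite eN subn1 /= doubleK.
have h2 : ((N + 1)./2 = u.+1)%N by rewrite eN addn1 -doubleS doubleK.
rewrite /lastcol /= negbK (negbTE es) h1 h2 -/t.
rewrite (@big_ltn _ _ _ t.+1 u.+1) 1?(@big_ltn _ _ _ t.+1 u.+2); try lia.
have -> : (2 * t.+1 - 1 = s.+1)%N by rewrite es' -muln2; lia.
have -> : (2 * t.+1 - 2 = s)%N by rewrite es' -muln2; lia.
have -> : (t.+1 == u.+1) = false by apply/negbTE; rewrite eqSS; apply/eqP; lia.
have -> : (t.+2 == u.+1) = false by apply/negbTE; rewrite eqSS; apply/eqP; lia.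
have hs_neq0 : hv s != 0 by apply: hv_neq0; lia.
have Q_neq0 : \prod_(t.+2 <= j < u.+2) hv (2 * j - 2)%N != 0.
  by apply: prod_nat_neq0 => j /andP[_ Hj]; apply: hv_neq0; rewrite eN -muln2; lia.
by field; rewrite Q_neq0 hs_neq0.
Qed.

(* The recursion [lastcol_step] is exactly what makes the last column of
   [Atilde] orthogonal to its first [N-2] rows. *)
Lemma atilde_mul_lastcol r : (r <= N - 3)%N ->
  \sum_(p < N.+1) atilde r p * lastcol N hv p = 0.
Proof.
move=> Hr; case oR: (odd r); last first.
  apply: big1 => p _; have [Hp|Hp] := ltnP p N; last first.
    rewrite (_ : (p : nat) = N); last by move: (ltn_ord p); lia.
    by rewrite lastcol_odd ?mulr0.
  rewrite atilde_tridiag //; case: eqP => [->|_]; first by rewrite lastcol_odd ?mulr0 //= oR.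
  case: eqP => [E|_]; last by rewrite mul0r.
  by rewrite lastcol_odd ?mulr0 //; move: oR; rewrite E /= => /negbT; rewrite negbK.
case: r oR Hr => [//|r] /= er Hr.
have Hne : (r.+1 != N - 3)%N.
  by apply/eqP => /(congr1 odd); rewrite /= er oddB ?oddN //; lia.
rewrite (@sum_ord_pair _ _ (fun p => atilde r.+1 p * lastcol N hv p) r r.+2);
  try by [lia | apply/eqP; lia].
  rewrite !atilde_tridiag; try lia.
  have -> : (r == r.+2) = false by apply/negbTE/eqP; lia.
  by rewrite !eqxx mulNr lastcol_step ?addNr //; lia.
move=> p Hp Hp1 Hp2; have [HpN|HpN] := ltnP p N; last first.
  by rewrite (_ : p = N) ?lastcol_odd ?mulr0 //; lia.
rewrite atilde_tridiag // (negbTE Hp2); case: eqP => [/eqP|_]; last by rewrite mul0r.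
by rewrite eqSS eq_sym (negbTE Hp1).
Qed.

Lemma Atilde_powS_row2 k q : (q <= N)%N ->
  mxn (Atilde N hv ^+ k.+1) 1 q = \sum_(p < N.+1) mxn (Atilde N hv ^+ k) 1 p * atilde p q.
Proof.
move=> Hq; rewrite exprSr -mulmxE mxn_mul ?odd_gt0 //.
by apply: eq_bigr => p _; rewrite mxn_Atilde ?leq_ord.
Qed.

Lemma Atilde_sqr_last r : (r <= N - 3)%N -> mxn (Atilde N hv ^+ 2) r N = 0.
Proof.
move=> Hr; rewrite expr2 -mulmxE mxn_mul //; last lia.
rewrite -[RHS](@atilde_mul_lastcol r) //; apply: eq_bigr => p _.
by rewrite !mxn_Atilde ?atilde_last ?leq_ord //; lia.
Qed.

Lemma Atilde_pow_row2 m : (m <= N - 2)%N ->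
  (forall q, (m.+1 < q <= N)%N -> mxn (Atilde N hv ^+ m) 1 q = 0) /\
  mxn (Atilde N hv ^+ m) 1 m.+1 = \prod_(1 <= i < m.+1) hv i.
Proof.
have N_gt0 := odd_gt0 oddN; set A := Atilde N hv.
elim/ltn_ind: m => -[|m] IH Hm.
  split; last by rewrite expr0 mxn1 ?big_geq.
  by move=> q /andP[Hq HqN]; rewrite expr0 mxn1 //; case: eqP => //; lia.
have [supp lead] := IH m (ltnSn m) (ltnW Hm).
split=> [q /andP[Hq HqN]|]; last first.
  rewrite Atilde_powS_row2; last lia.
  rewrite (@sum_ord_single _ _ (fun p => mxn (A ^+ m) 1 p * atilde p m.+2) m.+1); last 2 first.
  - lia.
  - move=> p Hp Hpm; rewrite atilde_tridiag; last lia.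
    rewrite eqSS eq_sym (negbTE Hpm); case: eqP => [E|_]; last by rewrite mulr0.
    by rewrite supp ?mul0r //; lia.
  by rewrite lead atilde_tridiag ?eqxx ?[RHS]big_nat_recr //; lia.
have [HqN'|HqN'] := ltnP q N.
  rewrite Atilde_powS_row2 //; apply: big1 => p _; rewrite atilde_tridiag //.
  case: eqP => [E|_]; first by rewrite supp ?mul0r //; move: (ltn_ord p); lia.
  case: eqP => [E|_]; last by rewrite mulr0.
  by rewrite supp ?mul0r //; move: (ltn_ord p); lia.
have -> : q = N by lia.
case: m IH supp lead Hm Hq => [|m] IH supp lead Hm Hq.
  rewrite Atilde_powS_row2 //.
  rewrite (@sum_ord_single _ _ (fun p => mxn (A ^+ 0) 1 p * atilde p N) 1%N) //; last first.
    by move=> p Hp Hp1; rewrite mxn1 // eq_sym (negbTE Hp1) mul0r.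
  by rewrite atilde_last lastcol_odd ?mulr0.
have [supp' _] := IH m (leqW (ltnSn m)) (leq_trans (leqnSn m) (ltnW Hm)).
rewrite -addn2 exprD -mulmxE mxn_mul //.
apply: big1 => r _; have [Hr|Hr] := leqP r m.+1.
  by rewrite Atilde_sqr_last ?mulr0 //; lia.
by rewrite supp' ?mul0r //; move: (ltn_ord r); lia.
Qed.

End AtildeEntries.

Lemma ecolE (R : nzRingType) n j : (j <= n)%N ->
  ecol R n.+1 j.+1 = delta_mx (inord j) 0.
Proof.
move=> Hj; apply/matrixP => r c; rewrite !mxE ord1 eqxx andbT eqSS.
by rewrite -(inj_eq val_inj) /= inordK.
Qed.

Section Similarity.
Variables (R : fieldType) (N : nat) (h h' : nat -> R) (S : 'M[R]_N.+1).
Hypotheses (oddN : odd N)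
  (h_neq0 : forall j, (j <= N)%N -> h j != 0)
  (h'_neq0 : forall j, (j <= N)%N -> h' j != 0)
  (SA : S *m Atilde N h = Atilde N h' *m S)
  (Se1 : S *m ecol R N.+1 1 = ecol R N.+1 1)
  (e2S : (ecol R N.+1 2)^T *m S = (ecol R N.+1 2)^T).

Local Notation s := (mxn S).

Let N_gt0 : (0 < N)%N := odd_gt0 oddN.

Lemma S_col0 r : (r <= N)%N -> s r 0 = (r == 0)%N%:R.
Proof.
move=> Hr; move/(congr1 (fun M : 'cV[R]_N.+1 => M (inord r) 0)): Se1.
rewrite ecolE // -colE !mxE andbT /mxn => ->.
by rewrite -(inj_eq val_inj) /= !inordK.
Qed.

Lemma S_row1 q : (q <= N)%N -> s 1 q = (q == 1)%N%:R.
Proof.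
move=> Hq; move/(congr1 (fun M : 'rV[R]_N.+1 => M 0 (inord q))): e2S.
rewrite ecolE // trmx_delta -rowE !mxE eqxx /= /mxn => ->.
by rewrite -(inj_eq val_inj) /= !inordK // eq_sym.
Qed.

Lemma S_intertwine r q : (r <= N)%N -> (q <= N)%N ->
  \sum_(p < N.+1) s r p * atilde N h p q = \sum_(p < N.+1) atilde N h' r p * s p q.
Proof.
move=> Hr Hq; move/(congr1 (fun M : 'M[R]_N.+1 => mxn M r q)): SA.
rewrite !mxn_mul // => E.
transitivity (\sum_(p < N.+1) s r p * mxn (Atilde N h) p q).
  by apply: eq_bigr => p _; rewrite mxn_Atilde ?leq_ord.
by rewrite E; apply: eq_bigr => p _; rewrite mxn_Atilde ?leq_ord.
Qed.

Lemma S_row2_pow m q : (q <= N)%N ->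
  \sum_(p < N.+1) mxn (Atilde N h' ^+ m) 1 p * s p q = mxn (Atilde N h ^+ m) 1 q.
Proof.
move=> Hq; move/(congr1 (fun M : 'M[R]_N.+1 => mxn M 1 q)): (mulmx_intertwineX SA m).
rewrite !mxn_mul // => <-.
rewrite (@sum_ord_single _ _ (fun p => s 1 p * mxn (Atilde N h ^+ m) p q) 1%N) //.
  by rewrite S_row1 // eqxx mul1r.
by move=> p Hp Hp1; rewrite S_row1 // (negbTE Hp1) mul0r.
Qed.

Definition eps i := \prod_(0 <= j < i) (h' j / h j).

Lemma epsS i : eps i.+1 = eps i * (h' i / h i).
Proof. by rewrite /eps big_nat_recr. Qed.

Lemma eps_sqr_h i : (i <= N)%N -> eps i ^+ 2 = 1 -> eps i.+1 ^+ 2 = 1 ->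
  h' i ^+ 2 = h i ^+ 2.
Proof.
move=> Hi sq; rewrite epsS exprMn sq mul1r expr_div_n => E.
have hi2 : h i ^+ 2 != 0 by rewrite expf_neq0 // h_neq0.
by rewrite -[LHS](divfK hi2) E mul1r.
Qed.

Section NextColumn.
Variable c : nat.
Hypotheses (cN : (c < N)%N)
  (eps_sqr : forall i, (i <= c)%N -> eps i ^+ 2 = 1)
  (S_cols : forall i r, (i <= c)%N -> (r <= N)%N -> s r i = eps i * (r == i)%:R).

Lemma S_col_recurrence r : (r <= N)%N ->
  s r c.+1 * h c = (if (0 < c)%N then s r c.-1 * h c.-1 else 0) - eps c * atilde N h' r c.
Proof.
move=> Hr; have := S_intertwine Hr (ltnW cN); rewrite sum_mul_atilde //.
rewrite (@sum_ord_single _ _ (fun p => atilde N h' r p * s p c) c); last 2 first.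
- exact: ltnW.
- by move=> p Hp Hpc; rewrite S_cols // (negbTE Hpc) !mulr0.
rewrite (@S_cols c c (leqnn c) (ltnW cN)) eqxx mulr1 => E.
by rewrite [eps c * _]mulrC -E opprB addrC subrK.
Qed.

Lemma S_col_next r : (r <= N)%N -> s r c.+1 = eps c.+1 * (r == c.+1)%:R.
Proof.
move=> Hr; have hc : h c != 0 by rewrite h_neq0 // ltnW.
apply: (mulIf hc); rewrite S_col_recurrence // atilde_tridiag //.
have [->|Hrc] := eqVneq r c.+1.
  have prev0 : (if (0 < c)%N then s c.+1 c.-1 * h c.-1 else 0) = 0.
    case: ifP => // c_gt0; rewrite S_cols ?leq_pred //.
    by rewrite (_ : (c.+1 == c.-1) = false) ?mulr0 ?mul0r //; apply: gtn_eqF; lia.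
  by rewrite prev0 (ltn_eqF (leqnSn _)) mulr1 epsS; field.
rewrite mulr0 mul0r.
have [Ec|Hcr] := eqVneq c r.+1.
  (* [r = c - 1]: the two contributions cancel since [h'_r^2 = h_r^2] *)
  subst c; have hr : h r != 0 by rewrite h_neq0 // ltnW // ltnW.
  have sqr : h' r ^+ 2 = h r ^+ 2 by apply: eps_sqr_h; rewrite ?eps_sqr //; lia.
  rewrite /= S_cols // !eqxx mulr1 epsS; apply/eqP; rewrite subr_eq0; apply/eqP.
  by rewrite -mulrA; congr (_ * _); rewrite mulrAC -expr2 sqr expr2 mulfK.
rewrite mulr0 subr0.
case: ifP => // c_gt0; rewrite S_cols ?leq_pred //.
rewrite (_ : (r == c.-1) = false) ?mulr0 ?mul0r //.
by apply/negbTE/eqP => E; move/eqP: Hcr; lia.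
Qed.

End NextColumn.

Lemma eps1_eq1 : (forall r, (r <= N)%N -> s r 1 = eps 1 * (r == 1)%N%:R) -> eps 1 = 1.
Proof. by move=> col1; rewrite -[RHS](S_row1 N_gt0) col1 // eqxx mulr1. Qed.

Lemma eps1E : eps 1 = h' 0 / h 0.
Proof. by rewrite epsS /eps big_geq // mul1r. Qed.

Lemma eps_sqr_next c : (c <= N - 2)%N -> eps 1 = 1 ->
  (forall r, (r <= N)%N -> s r c.+1 = eps c.+1 * (r == c.+1)%:R) ->
  eps c.+1 ^+ 2 = 1.
Proof.
move=> Hc eps1 col; have Hc1 : (c.+1 <= N)%N by lia.
have := S_row2_pow c Hc1.
rewrite (@sum_ord_single _ _ (fun p => mxn (Atilde N h' ^+ c) 1 p * s p c.+1) c.+1);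
  last 2 first.
- lia.
- by move=> p Hp Hpc; rewrite col ?(negbTE Hpc) ?mulr0 //; lia.
rewrite col // eqxx mulr1.
rewrite (Atilde_pow_row2 _ h'_neq0 Hc).2 // (Atilde_pow_row2 _ h_neq0 Hc).2 //.
set P' := \prod_(1 <= i < c.+1) h' i; set P := \prod_(1 <= i < c.+1) h i => E.
have P_neq0 : P != 0 by apply: prod_nat_neq0 => j /andP[_ Hj]; apply: h_neq0; lia.
have epsE : eps c.+1 = P' / P.
  by rewrite /eps big_ltn // -eps1E eps1 mul1r prodf_div.
have PP : P ^+ 2 = P' ^+ 2 by rewrite expr2 -{1}E epsE; field.
by rewrite epsE expr_div_n -PP divff // expf_neq0.
Qed.

Lemma S_cols_signed c : (c <= N - 1)%N ->
  (forall i, (i <= c)%N -> eps i ^+ 2 = 1) /\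
  (forall i r, (i <= c)%N -> (r <= N)%N -> s r i = eps i * (r == i)%:R).
Proof.
elim: c => [|c IH] Hc.
  split=> [i|i r]; rewrite leqn0 => /eqP ->; first by rewrite /eps big_geq ?expr1n.
  by move=> Hr; rewrite /eps big_geq // mul1r S_col0.
have [IHsq IHcol] := IH (ltnW Hc).
have cN : (c < N)%N by lia.
have col := S_col_next cN IHsq IHcol.
have cols i r : (i <= c.+1)%N -> (r <= N)%N -> s r i = eps i * (r == i)%:R.
  by rewrite leq_eqVlt ltnS => /orP[/eqP ->|]; [exact: col | exact: IHcol].
split=> // i; rewrite leq_eqVlt ltnS => /orP[/eqP ->|]; last exact: IHsq.
by apply: eps_sqr_next col; [lia | apply: eps1_eq1 => r Hr; apply: cols].
Qed.

End Similarity.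

Theorem lemma5 (R : realFieldType) (N : nat) (h h' : nat -> R)
    (S : 'M[R]_(N.+1)) :
  odd N -> (5 <= N)%N ->
  (forall j, (j <= N)%N -> h j != 0) ->
  (forall j, (j <= N)%N -> h' j != 0) ->
  S \in unitmx ->
  S *m Atilde N h = Atilde N h' *m S ->
  S *m ecol R N.+1 1 = ecol R N.+1 1 ->
  (ecol R N.+1 2)^T *m S = (ecol R N.+1 2)^T ->
  forall k : nat, (3 <= k)%N -> (k <= N - 1)%N ->
    (exists eps : nat -> R,
        eps 1%N = 1 /\ eps 2%N = 1 /\
        (forall j, (3 <= j <= k)%N -> eps j = 1 \/ eps j = -1) /\
        (forall j : 'I_N.+1, (j < k)%N -> col j S = eps j.+1 *: ecol R N.+1 j.+1))
    /\ h 0%N = h' 0%N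
    /\ `|h 1%N| = `|h' 1%N|
    /\ (forall j, (1 <= j <= k - 2)%N -> `|h j.+1| = `|h' j.+1|).
Proof.
move=> oN _ h_neq0 h'_neq0 _ SA Se1 e2S k k3 kN.
have [sq cols] := S_cols_signed oN h_neq0 h'_neq0 SA Se1 e2S kN.
have eps1 : eps h h' 1 = 1 by apply: (eps1_eq1 oN e2S) => r; apply: cols; lia.
have abs_h i : (i < k)%N -> `|h i| = `|h' i|.
  move=> Hi; have iN : (i <= N)%N by lia.
  have /eqP := eps_sqr_h h_neq0 iN (sq i (ltnW Hi)) (sq i.+1 Hi).
  by rewrite eqf_sqr => /orP[] /eqP ->; rewrite ?normrN.
have h0 : h' 0%N = h 0%N.
  by rewrite -[h' 0%N](divfK (h_neq0 0%N isT)) -eps1E eps1 mul1r.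
split; last first.
  split; first by rewrite h0.
  by split=> [|j /andP[_ Hj]]; apply: abs_h; lia.
exists (fun j => eps h h' j.-1); split; first by rewrite /= /eps big_geq.
split=> //; split.
- move=> j /andP[_ Hj]; have /eqP := sq j.-1 (leq_trans (leq_pred j) Hj).
  by rewrite sqrf_eq1 => /orP[] /eqP; auto.
- move=> j Hj; apply/matrixP => r c.
  by rewrite !mxE (mxnE S) cols ?eqSS ?leq_ord // ltnW.
Qed.
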